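(* Let $\{\omega_k\}_{k\ge 0}$, $\omega_k=(Z_k,E_k,-\lambda_k)$, be generated by the iteration below with parameters $(W_k,\theta_k,\beta_k)$ ($\theta_k,\beta_k$ entrywise positive). Then for every $k\ge 0$ and every triple $\omega=(Z,E,-\lambda)\in\mathbb{R}^{d\times n}\times\mathbb{R}^{m\times n}\times\mathbb{R}^{m\times n}$, with $u=(Z,E)$ and $u_{k+1}=(Z_{k+1},E_{k+1})$, $$h(u)-h(u_{k+1})+\big\langle \omega-\omega_{k+1},\ \mathcal{F}_k(\omega_{k+1})+\mathcal{G}_k(E_k-E_{k+1})+\mathcal{H}_k(\omega_{k+1}-\omega_k)\big\rangle\ \ge 0 .$$
   Context: Let $A\in\mathbb{R}^{m\times d}$, $X\in\mathbb{R}^{m\times n}$, and let $f:\mathbb{R}^{d\times n}\to\mathbb{R}$, $g:\mathbb{R}^{m\times n}\to\mathbb{R}$ be convex. Consider the problem $\min_{Z,E} f(Z)+g(E)$ subject to $X=AZ+E$, and write $h(u)=f(Z)+g(E)$ for $u=(Z,E)$. Triples are written $\omega=(Z,E,-\lambda)$ with $\lambda\in\mathbb{R}^{m\times n}$ a Lagrange multiplier; the inner product of triples is the sum of the componentwise Frobenius inner products. $\circ$ is the entrywise (Hadamard) product, and for an entrywise positive matrix $\beta$, $\beta^{-1}$ denotes its entrywise reciprocal. For a matrix $M$ and entrywise positive $\theta$ of the same size, write $\tfrac{\theta}{2}\circ\|M\|_F^2:=\tfrac12\sum_{ij}\theta_{ij}M_{ij}^2$. Iteration (D-LADMM): given $(Z_k,E_k,\lambda_k)$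 and parameters $W_k\in\mathbb{R}^{m\times d}$, $\theta_k\in\mathbb{R}^{d\times n}$, $\beta_k\in\mathbb{R}^{m\times n}$ with $\theta_k,\beta_k$ entrywise positive, $Z_{k+1}=\arg\min_Z\{ f(Z)+\tfrac{\theta_k}{2}\circ\|Z-Z_k+\theta_k^{-1}\circ W_k^\top(\lambda_k+\beta_k\circ(AZ_k+E_k-X))\|_F^2\}$, $E_{k+1}=\arg\min_E\{g(E)+\tfrac{\beta_k}{2}\circ\|E-X+AZ_{k+1}+\beta_k^{-1}\circ\lambda_k\|_F^2\}$, $\lambda_{k+1}=\lambda_k+\beta_k\circ(AZ_{k+1}+E_{k+1}-X)$. Operators: $\mathcal{D}_k(Z)=\theta_k\circ Z-W_k^\top(\beta_k\circ(AZ))$; $\mathcal{H}_k(Z,E,-\lambda)=(\mathcal{D}_k(Z),\ \beta_k\circ E,\ \beta_k^{-1}\circ(-\lambda))$; $\mathcal{F}_k(Z,E,-\lambda)=(W_k^\top\lambda,\ \lambda,\ AZ+E-X)$; for $M\in\mathbb{R}^{m\times n}$, $\mathcal{G}_k(M)=(W_k^\top(\beta_k\circ M),\ \beta_k\circ M,\ 0)$. Standing assumption of the paper: for $\sigma\ge0$, $\mathcal{S}(\sigma,A)$ is the set of triples $(W,\theta,\beta)$ with $\|W-A\|\le\sigma$ (spectral norm), $\theta,\beta$ entrywise positive, and the linear operator $Z\mapsto\theta\circ Z-W^\top(\beta\circ(AZ))$ positive definite (i.e. $\langle \cdot(Z),Z\rangle>0$ for all $Z\ne0$); it is assumed that there is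 a constant $c$ such that $\mathcal{S}(\sigma,A)\neq\emptyset$ for all $0\le\sigma\le c$. *)

From HB Require Import structures.
From mathcomp Require Import all_boot all_order all_algebra.
Set Implicit Arguments. Unset Strict Implicit. Unset Printing Implicit Defensive.
Import Order.TTheory GRing.Theory Num.Theory.
Local Open Scope ring_scope.

Section Defs.
Variable R : realFieldType.

Definition hada {p q} (a b : 'M[R]_(p, q)) : 'M[R]_(p, q) :=
  \matrix_(i, j) (a i j * b i j).
Definition einv {p q} (a : 'M[R]_(p, q)) : 'M[R]_(p, q) :=
  \matrix_(i, j) (a i j)^-1.
Definition epos {p q} (a : 'M[R]_(p, q)) : Prop := forall i j, 0 < a i j.
Definition frob {p q} (a b : 'M[R]_(p, q)) : R :=
  \sum_(i < p) \sum_(j < q) a i j * b i j.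
(* weighted squared norm: (theta/2) o ||M||_F^2 = 1/2 sum theta_ij M_ij^2 *)
Definition wsq {p q} (theta M : 'M[R]_(p, q)) : R :=
  2^-1 * \sum_(i < p) \sum_(j < q) theta i j * M i j ^+ 2.

Definition convex_fun {p q} (f : 'M[R]_(p, q) -> R) : Prop :=
  forall (x y : 'M[R]_(p, q)) (t : R), 0 <= t -> t <= 1 ->
    f (t *: x + (1 - t) *: y) <= t * f x + (1 - t) * f y.

Definition is_argmin {T : Type} (phi : T -> R) (x : T) : Prop :=
  forall y, phi x <= phi y.

Variables m d n : nat.

Definition triple := ('M[R]_(d, n) * 'M[R]_(m, n) * 'M[R]_(m, n))%type.
Definition mk_omega (Z : 'M[R]_(d, n)) (E lam : 'M[R]_(m, n)) : triple :=
  (Z, E, - lam).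
Definition tadd (a b : triple) : triple :=
  (a.1.1 + b.1.1, a.1.2 + b.1.2, a.2 + b.2).
Definition tsub (a b : triple) : triple :=
  (a.1.1 - b.1.1, a.1.2 - b.1.2, a.2 - b.2).
Definition tinner (a b : triple) : R :=
  frob a.1.1 b.1.1 + frob a.1.2 b.1.2 + frob a.2 b.2.

Variables (A : 'M[R]_(m, d)) (X : 'M[R]_(m, n)).

Definition Dop (W : 'M[R]_(m, d)) (theta : 'M[R]_(d, n)) (beta : 'M[R]_(m, n))
  (Z : 'M[R]_(d, n)) : 'M[R]_(d, n) :=
  hada theta Z - W^T *m hada beta (A *m Z).
Definition Hop W theta beta (w : triple) : triple :=
  (Dop W theta beta w.1.1, hada beta w.1.2, hada (einv beta) w.2).
(* F_k(Z, E, -lambda) = (W^T lambda, lambda, A Z + E - X), lambda = - third *)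
Definition Fop (W : 'M[R]_(m, d)) (w : triple) : triple :=
  (W^T *m (- w.2), - w.2, A *m w.1.1 + w.1.2 - X).
Definition Gop (W : 'M[R]_(m, d)) (beta : 'M[R]_(m, n)) (M : 'M[R]_(m, n))
  : triple := (W^T *m hada beta M, hada beta M, 0).

End Defs.

(** The Z- and E-updates are proximal steps: each minimises a convex function
    plus a positively weighted squared distance to a centre, so the usual
    first-order variational inequality holds at the minimiser (compare with
    a point on the segment towards any competitor and let the step shrink).
    Adding the two inequalities gives the claim, once one checks that
    [F + G + H] at [omega_(k+1)] is exactly (weighted gradient of the Z-step,
    weighted gradient of the E-step, 0): this is where the multiplier update
    [lambda_(k+1) = lambda_k + beta o (A Z_(k+1) + E_(k+1) - X)] is used. *)

From HB Require Import structures.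
From mathcomp Require Import all_boot all_order all_algebra.
From mathcomp Require Import ring lra.
Set Implicit Arguments. Unset Strict Implicit. Unset Printing Implicit Defensive.
Import Order.TTheory GRing.Theory Num.Theory.
Local Open Scope ring_scope.

Section Hadamard.
Variables (R : realFieldType) (p q : nat).
Implicit Types a b c th Z Y C : 'M[R]_(p, q).

Lemma hadaDr a b c : hada a (b + c) = hada a b + hada a c.
Proof. by apply/matrixP => i j; rewrite !mxE mulrDr. Qed.

Lemma hada_einvK a b : epos a -> hada a (hada (einv a) b) = b.
Proof. by move=> pa; apply/matrixP => i j; rewrite !mxE mulrA divff ?mul1r ?gt_eqF. Qed.

Lemma frobr0 a : frob a 0 = 0.
Proof. by rewrite /frob big1 // => i _; rewrite big1 // => j _; rewrite mxE mulr0. Qed.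

Lemma wsq_ge0 th b : epos th -> 0 <= wsq th b.
Proof.
move=> pth; rewrite /wsq mulr_ge0 ?invr_ge0 ?ler0n //.
by apply: sumr_ge0 => i _; apply: sumr_ge0 => j _; rewrite mulr_ge0 ?sqr_ge0 ?ltW.
Qed.

Lemma wsq_convex_comb th Z Y C (t : R) :
  wsq th (t *: Z + (1 - t) *: Y - C) =
  wsq th (Y - C) + t * frob (Z - Y) (hada th (Y - C)) + t ^+ 2 * wsq th (Z - Y).
Proof.
rewrite /wsq /frob !mulr_sumr -!big_split; apply: eq_bigr => i _ /=.
rewrite !mulr_sumr -!big_split; apply: eq_bigr => j _ /=.
by rewrite !mxE; field.
Qed.

End Hadamard.

Lemma ge0_of_ge0_perturb (R : realFieldType) (a c : R) :
  0 <= c -> (forall t, 0 < t -> t <= 1 -> 0 <= a + t * c) -> 0 <= a.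
Proof.
move=> c_ge0 perturb; rewrite leNgt; apply/negP => a_lt0.
have s_gt0 : 0 < - a + c by lra.
(* the step t = -a / (c - a) in (0, 1] makes a + t c = - a^2 / (c - a) < 0 *)
have := perturb (- a / (- a + c)).
rewrite divr_gt0 ?oppr_gt0 // ler_pdivrMr // mul1r.
have -> : a + - a / (- a + c) * c = - (a * a) / (- a + c) by field; lra.
by rewrite pmulr_lge0 ?invr_gt0 // => /(_ isT); nra.
Qed.

Lemma prox_argmin_variational (R : realFieldType) (p q : nat)
    (f : 'M[R]_(p, q) -> R) (th C Z1 : 'M[R]_(p, q)) :
  convex_fun f -> epos th ->
  is_argmin (fun Y => f Y + wsq th (Y - C)) Z1 ->
  forall Z, 0 <= f Z - f Z1 + frob (Z - Z1) (hada th (Z1 - C)).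
Proof.
move=> f_cvx pth Z1_min Z.
apply: (ge0_of_ge0_perturb (wsq_ge0 (Z - Z1) pth)) => t t_gt0 t_le1.
have := Z1_min (t *: Z + (1 - t) *: Z1); rewrite /= wsq_convex_comb.
have := f_cvx Z Z1 t (ltW t_gt0) t_le1.
set w := wsq th (Z - Z1); set v := frob _ _ => f_comb Z1_le.
suff : 0 <= t * (f Z - f Z1 + v + t * w) by rewrite pmulr_rge0.
nra.
Qed.

Section DLADMMStep.
Variables (R : realFieldType) (m d n : nat).
Variables (A : 'M[R]_(m, d)) (X : 'M[R]_(m, n)).
Variables (W : 'M[R]_(m, d)) (th : 'M[R]_(d, n)) (be : 'M[R]_(m, n)).
Variables (Zk Z1 : 'M[R]_(d, n)) (Ek E1 lamk lam1 : 'M[R]_(m, n)).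
Hypotheses (pth : epos th) (pbe : epos be).
Hypothesis lam_update : lam1 = lamk + hada be (A *m Z1 + E1 - X).

Definition zstep_center : 'M[R]_(d, n) :=
  Zk - hada (einv th) (W^T *m (lamk + hada be (A *m Zk + Ek - X))).

Definition estep_center : 'M[R]_(m, n) :=
  X - A *m Z1 - hada (einv be) lamk.

Lemma sub_zstep_center Y : Y - zstep_center
  = Y - Zk + hada (einv th) (W^T *m (lamk + hada be (A *m Zk + Ek - X))).
Proof. by rewrite /zstep_center opprB addrCA addrC. Qed.

Lemma sub_estep_center Y :
  Y - estep_center = Y - X + A *m Z1 + hada (einv be) lamk.
Proof. by apply/matrixP => i j; rewrite !mxE; ring. Qed.

Lemma step_operator_sum :
  tadd (tadd (Fop A X W (mk_omega Z1 E1 lam1)) (Gop W be (Ek - E1)))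
       (Hop A W th be (tsub (mk_omega Z1 E1 lam1) (mk_omega Zk Ek lamk)))
  = (hada th (Z1 - zstep_center), hada be (E1 - estep_center), 0).
Proof.
rewrite /mk_omega /Fop /Gop /Hop /Dop /tadd /tsub /= !opprK.
have multiplier_Z : lam1 + hada be (Ek - E1) - hada be (A *m (Z1 - Zk))
    = lamk + hada be (A *m Zk + Ek - X).
  rewrite lam_update mulmxBr; apply/matrixP => i j; rewrite !mxE; ring.
congr (_, _, _).
- rewrite sub_zstep_center [RHS]hadaDr hada_einvK // -multiplier_Z.
  by rewrite [in RHS]mulmxBr [in RHS]mulmxDr addrCA.
- rewrite sub_estep_center lam_update; apply/matrixP => i j; rewrite !mxE.
  by field; rewrite gt_eqF.
- rewrite lam_update; apply/matrixP => i j; rewrite !mxE.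
  by field; rewrite gt_eqF.
Qed.

End DLADMMStep.

Theorem lemma1 (R : realFieldType) (m d n : nat)
  (A : 'M[R]_(m, d)) (X : 'M[R]_(m, n))
  (f : 'M[R]_(d, n) -> R) (g : 'M[R]_(m, n) -> R)
  (Zs : nat -> 'M[R]_(d, n)) (Es lams : nat -> 'M[R]_(m, n))
  (Ws : nat -> 'M[R]_(m, d)) (thetas : nat -> 'M[R]_(d, n))
  (betas : nat -> 'M[R]_(m, n)) :
  convex_fun f -> convex_fun g ->
  (forall k, epos (thetas k)) -> (forall k, epos (betas k)) ->
  (forall k, is_argmin (fun Z => f Z + wsq (thetas k)
      (Z - Zs k + hada (einv (thetas k))
         ((Ws k)^T *m (lams k + hada (betas k) (A *m Zs k + Es k - X)))))
      (Zs k.+1)) ->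
  (forall k, is_argmin (fun E => g E + wsq (betas k)
      (E - X + A *m Zs k.+1 + hada (einv (betas k)) (lams k)))
      (Es k.+1)) ->
  (forall k, lams k.+1 = lams k + hada (betas k) (A *m Zs k.+1 + Es k.+1 - X)) ->
  forall (k : nat) (Z : 'M[R]_(d, n)) (E lam : 'M[R]_(m, n)),
    let w := mk_omega Z E lam in
    let wk := mk_omega (Zs k) (Es k) (lams k) in
    let wk1 := mk_omega (Zs k.+1) (Es k.+1) (lams k.+1) in
    0 <= f Z + g E - (f (Zs k.+1) + g (Es k.+1))
         + tinner (tsub w wk1)
             (tadd (tadd (Fop A X (Ws k) wk1)
                         (Gop (Ws k) (betas k) (Es k - Es k.+1)))
                   (Hop A (Ws k) (thetas k) (betas k) (tsub wk1 wk))).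
Proof.
move=> f_cvx g_cvx pth pbe Zstep Estep lam_update k Z E lam; cbv zeta.
rewrite step_operator_sum //.
have Zmin : is_argmin (fun Y => f Y + wsq (thetas k) (Y - zstep_center A X
    (Ws k) (thetas k) (betas k) (Zs k) (Es k) (lams k))) (Zs k.+1).
  by move=> Y; rewrite /= !sub_zstep_center; exact: Zstep.
have Emin : is_argmin (fun Y => g Y + wsq (betas k) (Y - estep_center A X
    (betas k) (Zs k.+1) (lams k))) (Es k.+1).
  by move=> Y; rewrite /= !sub_estep_center; exact: Estep.
have := prox_argmin_variational f_cvx (pth k) Zmin Z.
have := prox_argmin_variational g_cvx (pbe k) Emin E.
rewrite /tinner /= frobr0 addr0; lra.
Qed.
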